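(* Let $A\subset\Pi$, $\alpha_i\in\Pi\setminus A$ and $\epsilon=(\epsilon_1,\dots,\epsilon_l)\in\mathcal E^A$. (a) If $\epsilon_i=1$ then $s_{\alpha_i}h_\epsilon=h_\epsilon$. If $\epsilon_i=-1$ then $s_{\alpha_i}h_\epsilon=h_{\epsilon'}$ with $\epsilon'_j=\epsilon_j\epsilon_i^{-C_{j,i}}$; moreover $h_{\epsilon'}$ factors as $h_{\epsilon'}=\big(\prod_{\alpha_j\in A,\ C_{j,i}\text{ odd}}h_j\big)h_{\epsilon_A}$ for some $\epsilon_A\in\mathcal E^A$. (b) If $\epsilon_i=1$ then $s_{\alpha_i}(h_\epsilon H^A)\subset h_\epsilon H^A$. If $\epsilon_i=-1$ then $s_{\alpha_i}(h_\epsilon H^A)\subset h_{\epsilon'}H^A$ with $\epsilon'$ as in (a), and $h_{\epsilon'}$ factors as in (a). (c) For every $k$, every $h\in H_\epsilon:=h_\epsilon H$ and every $h'\in s_{\alpha_i}(H_\epsilon)$, the sign $\epsilon_k$ of $\chi_{\alpha_k}(h)$ equals the sign of $\chi_{s_{\alpha_i}\alpha_k}(h')$.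
   Context: $\mathfrak g$ is a real split semisimple Lie algebra of rank $l$, $\mathfrak h$ a split Cartan subalgebra, $\Pi=\{\alpha_1,\dots,\alpha_l\}$ simple roots, $h_{\alpha_j}$ coroots, $C_{i,j}=\alpha_i(h_{\alpha_j})$. $G_{\mathbb C}$ is the connected adjoint group of $\mathfrak g\otimes\mathbb C$, $H_{\mathbb C}$ its Cartan subgroup with Lie algebra $\mathfrak h\otimes\mathbb C$, $\tilde G=\{g\in G_{\mathbb C}:\mathrm{Ad}(g)\mathfrak g\subset\mathfrak g\}$, $H_{\mathbb R}=H_{\mathbb C}\cap\tilde G$, $H=\exp\mathfrak h$, and $\chi_\phi$ denotes the root character of $\phi$ ($\mathrm{Ad}(h)e_\phi=\chi_\phi(h)e_\phi$), real and nonzero on $H_{\mathbb R}$. Let $y_i\in\mathfrak h$ with $\alpha_j(y_i)=\pi\delta_{ij}$, $h_i=\exp(\sqrt{-1}y_i)$, $h_\epsilon=\prod_{i:\epsilon_i=-1}h_i$ for $\epsilon\in\{\pm1\}^l$. For $A\subset\Pi$: $\mathcal E^A=\{\epsilon\in\{\pm1\}^l:\epsilon_j=1\text{ whenever }\alpha_j\in A\}$, and $H^A=\exp(\mathfrak h^A)$ with $\mathfrak h^A$ the real span of $h_{\alpha_j}$, $\alpha_j\notin A$. The Weyl group acts on $H_{\mathbb R}$ by conjugation by normalizer representatives. *)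

(* Coordinate model of the real points of the Cartan subgroup of the adjoint *)
(* group: an element h of H_C is determined by the values chi_{alpha_j}(h)   *)
(* of the simple root characters (H_C = Hom(root lattice, C^x) for the        *)
(* adjoint group); H_R is the set of h with all these values real nonzero,   *)
(* so elements of H_R are modelled as functions 'I_l -> R.                   *)
From mathcomp Require Import all_boot all_order all_algebra.
From mathcomp Require Import reals.
From mathcomp.analysis Require Import sequences.
Set Implicit Arguments. Unset Strict Implicit. Unset Printing Implicit Defensive.
Import Order.TTheory GRing.Theory Num.Theory.
Local Open Scope ring_scope.

(* C i j = alpha_i (h_{alpha_j}) : the Cartan matrix of a real split       *)
(* semisimple Lie algebra of rank l, w.r.t. the simple roots Pi.           *)
Definition is_cartan (R : realType) (l : nat) (C : 'M[int]_l) : Prop :=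
  (forall i, C i i = 2) /\
  (forall i j, i != j -> C i j <= 0) /\
  (forall i j, (C i j == 0) = (C j i == 0)) /\
  exists d : 'I_l -> R, (forall i, 0 < d i) /\
    (forall i j, (C i j)%:~R * d j = (C j i)%:~R * d i) /\
    (forall v : 'I_l -> R, (exists i, v i != 0) ->
       0 < \sum_i \sum_j v i * (C i j)%:~R * d j * v j).

Definition tmul (R : realType) (l : nat) (t u : 'I_l -> R) : 'I_l -> R :=
  fun j => t j * u j.

(* chi_phi(h) for phi = sum_j n_j alpha_j *)
Definition chi (R : realType) (l : nat) (n : 'I_l -> int) (t : 'I_l -> R) : R :=
  \prod_(j < l) t j ^ n j.

Definition sroot (l : nat) (k : 'I_l) : 'I_l -> int :=
  fun j => if j == k then 1 else 0.

(* s_{alpha_i} beta = beta - beta(h_{alpha_i}) alpha_i, on coefficient vectors *)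
Definition srefl (l : nat) (C : 'M[int]_l) (i : 'I_l) (n : 'I_l -> int)
  : 'I_l -> int :=
  fun j => n j - (if j == i then \sum_(m < l) n m * C m i else 0).

(* action of s_{alpha_i} on H_R by conjugation with a normalizer           *)
(* representative: chi_phi(s.h) = chi_{s^{-1} phi}(h) = chi_{s phi}(h)     *)
Definition wact (R : realType) (l : nat) (C : 'M[int]_l) (i : 'I_l)
  (t : 'I_l -> R) : 'I_l -> R :=
  fun j => chi (srefl C i (sroot j)) t.

(* h_i = exp(sqrt(-1) y_i), alpha_j(y_i) = pi delta_ij :                    *)
(* chi_{alpha_j}(h_i) = exp(sqrt(-1) pi delta_ij)                          *)
Definition hgen (R : realType) (l : nat) (i : 'I_l) : 'I_l -> R :=
  fun j => if j == i then -1 else 1.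

Definition h_eps (R : realType) (l : nat) (eps : 'I_l -> R) : 'I_l -> R :=
  fun k => \prod_(i < l | eps i == -1) hgen R i k.

Definition in_EA (R : realType) (l : nat) (A : {set 'I_l}) (eps : 'I_l -> R)
  : Prop :=
  (forall j, eps j = 1 \/ eps j = -1) /\ (forall j, j \in A -> eps j = 1).

(* H^A = exp(h^A), h^A = real span of h_{alpha_j}, alpha_j notin A;        *)
(* chi_{alpha_k}(exp(sum_j c_j h_{alpha_j})) = exp(sum_j c_j C_{k,j}).      *)
Definition HA (R : realType) (l : nat) (C : 'M[int]_l) (A : {set 'I_l})
  (t : 'I_l -> R) : Prop :=
  exists c : 'I_l -> R, (forall j, j \in A -> c j = 0) /\
    t = (fun k => expR (\sum_(j < l) c j * (C k j)%:~R)).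

Definition Hexp (R : realType) (l : nat) (C : 'M[int]_l) (t : 'I_l -> R) : Prop :=
  HA C set0 t.

Definition in_coset (R : realType) (l : nat) (x : 'I_l -> R)
  (S : ('I_l -> R) -> Prop) (y : 'I_l -> R) : Prop :=
  exists z, S z /\ y = tmul x z.

From mathcomp Require Import all_boot all_order all_algebra.
From mathcomp Require Import reals boolp.
From mathcomp.analysis Require Import sequences exp.
Set Implicit Arguments. Unset Strict Implicit. Unset Printing Implicit Defensive.
Import Order.TTheory GRing.Theory Num.Theory.
Local Open Scope ring_scope.

(* In the coordinates chi_{alpha_j}, s_i acts by t_j |-> t_j * t_i ^ (- C j i):
   a group automorphism of the torus, involutive since C i i = 2.  The h_eps are
   exactly the sign vectors, so s_i h_eps = h_eps' on the nose; s_i only shifts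
   the h_{alpha_i}-coordinate of an element of H^A, so it preserves H^A when
   alpha_i is not in A; and as H consists of positive vectors, the signs of the
   coordinates of any element of h_eps H are those of eps. *)

Definition is_sign (R : numDomainType) (x : R) : Prop := x = 1 \/ x = -1.

Lemma oner_eqN1 (R : numDomainType) : ((1 : R) == -1) = false.
Proof. by rewrite eq_sym -subr_eq0 -opprD oppr_eq0 -mulr2n pnatr_eq0. Qed.

Lemma is_sign_neq0 (R : numDomainType) (x : R) : is_sign x -> x != 0.
Proof. by case=> ->; rewrite ?oppr_eq0 oner_eq0. Qed.

Lemma is_signM (R : numDomainType) (x y : R) :
  is_sign x -> is_sign y -> is_sign (x * y).
Proof.
by case=> -> [] ->; rewrite ?mul1r ?mulN1r ?opprK; [left | right | right | left].
Qed.

Lemma expN1z_eqN1 (R : numDomainType) (n : int) :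
  ((-1 : R) ^ n == -1) = odd `|n|%N.
Proof.
by rewrite expN1r -signr_odd; case: odd; rewrite ?expr1 ?eqxx ?expr0 ?oner_eqN1.
Qed.

Lemma is_sign_expz (R : numFieldType) (x : R) (n : int) :
  is_sign x -> is_sign (x ^ n).
Proof.
case=> ->; first by left; rewrite exp1rz.
by rewrite /is_sign expN1r -signr_odd; case: odd; [right | left].
Qed.

Lemma sgr_sign_mul (R : realDomainType) (e y : R) :
  is_sign e -> 0 < y -> Num.sg (e * y) = e.
Proof.
by move=> [] -> y_gt0; rewrite sgrM (gtr0_sg y_gt0) mulr1 ?sgr1 ?sgrN1.
Qed.

Lemma expRMz (R : realType) (n : int) (x : R) : expR (n%:~R * x) = expR x ^ n.
Proof.
case: n => m; first by rewrite -pmulrn expRM_natl.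
by rewrite NegzE mulNr expRN expRM_natl -exprnN.
Qed.

Section CartanTorus.

Variables (R : realType) (l : nat).
Implicit Types (t u x y h eps : 'I_l -> R) (i j k : 'I_l) (A : {set 'I_l}).

Lemma prod_expz_pred1 t j (e : int) :
  \prod_m t m ^ (if m == j then e else 0) = t j ^ e.
Proof.
by rewrite (bigD1 j) //= eqxx big1 ?mulr1 // => m /negbTE ->; rewrite expr0z.
Qed.

Lemma chi_sroot k t : chi (sroot k) t = t k.
Proof. by rewrite /chi /sroot prod_expz_pred1 expr1z. Qed.

Lemma prod_hgen (P : pred 'I_l) k :
  \prod_(j | P j) hgen R j k = if P k then -1 else 1.
Proof.
rewrite /hgen; case: ifP => Pk.
  rewrite (bigD1 k) //= eqxx big1 ?mulr1 // => j /andP [_ /negbTE].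
  by rewrite eq_sym => ->.
by apply: big1 => j Pj; case: eqP => // kj; rewrite -kj Pk in Pj.
Qed.

Lemma h_eps_sign eps : (forall j, is_sign (eps j)) -> h_eps eps = eps.
Proof.
move=> eps_sign; apply/funext => k; rewrite /h_eps prod_hgen.
by case: (eps_sign k) => ->; rewrite ?eqxx ?oner_eqN1.
Qed.

Lemma h_eps_splitA A eps :
  h_eps eps =
  tmul (fun k => \prod_(j | (j \in A) && (eps j == -1)) hgen R j k)
       (h_eps (fun k => if k \in A then 1 else eps k)).
Proof.
apply/funext => k; rewrite /tmul /h_eps !prod_hgen.
by case: (k \in A); rewrite /= ?oner_eqN1 ?mulr1 ?mul1r.
Qed.

Variable C : 'M[int]_l.

Lemma srefl_sroot i j m :
  srefl C i (sroot j) m = (if m == j then 1 else 0) + (if m == i then - C j i else 0).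
Proof.
rewrite /srefl /sroot; congr (_ + _); case: (m == i) => //.
by rewrite (bigD1 j) //= eqxx mul1r big1 ?addr0 // => k /negbTE ->; rewrite mul0r.
Qed.

Lemma wactE i t j : (forall m, t m != 0) -> wact C i t j = t j * t i ^ (- C j i).
Proof.
move=> t_neq0; rewrite /wact /chi.
under eq_bigr => m _ do rewrite srefl_sroot expfzDr //.
by rewrite big_split /= !prod_expz_pred1 expr1z.
Qed.

Lemma wact_tmul i t u : wact C i (tmul t u) = tmul (wact C i t) (wact C i u).
Proof.
apply/funext => j; rewrite /wact /chi /tmul -big_split.
by apply: eq_bigr => m _; apply: expfzMl.
Qed.

Lemma wactK i t : C i i = 2 -> (forall m, t m != 0) -> wact C i (wact C i t) = t.
Proof.
move=> Cii t_neq0; have wt_neq0 m : wact C i t m != 0.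
  by rewrite wactE // mulf_neq0 // expfz_neq0.
apply/funext => j; rewrite wactE // !wactE // Cii.
have -> : t i * t i ^ (- 2%:Z) = t i ^ (-1) by rewrite -{1}(expr1z (t i)) -expfzDr.
by rewrite exprz_exp mulN1r opprK -mulrA -expfzDr // addNr expr0z mulr1.
Qed.

Lemma wact_h_eps i eps : (forall j, is_sign (eps j)) ->
  wact C i (h_eps eps) = h_eps (fun j => eps j * eps i ^ (- C j i)).
Proof.
move=> eps_sign.
have eps'_sign j : is_sign (eps j * eps i ^ (- C j i)).
  exact: is_signM (is_sign_expz _ _).
rewrite !h_eps_sign //; apply/funext => j; apply: wactE => m.
exact: is_sign_neq0.
Qed.

Lemma HA_gt0 A t k : HA C A t -> 0 < t k.
Proof. by move=> [c [_ ->]]; apply: expR_gt0. Qed.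

Lemma wact_HA A i t : i \notin A -> HA C A t -> HA C A (wact C i t).
Proof.
move=> iA t_HA; have [c [c_A t_def]] := t_HA.
pose S := \sum_m c m * (C i m)%:~R.
exists (fun j => c j - (if j == i then S else 0)); split.
  move=> j jA; have /negbTE -> : j != i by apply: contraNneq iA => <-.
  by rewrite c_A // subr0.
apply/funext => k; rewrite wactE => [|m]; last exact/lt0r_neq0/(HA_gt0 m t_HA).
rewrite t_def -expRMz -expRD; congr expR.
under [RHS]eq_bigr => m _ do rewrite mulrBl.
have shift_i : \sum_m (if m == i then S else 0) * (C k m)%:~R = S * (C k i)%:~R.
  by rewrite (bigD1 i) //= eqxx big1 ?addr0 // => m /negbTE ->; rewrite mul0r.
by rewrite sumrB shift_i rmorphN mulNr mulrC.
Qed.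

Lemma wact_in_coset A i y x : i \notin A ->
  in_coset y (HA C A) x -> in_coset (wact C i y) (HA C A) (wact C i x).
Proof.
move=> iA [z [z_HA ->]]; exists (wact C i z).
by rewrite wact_tmul; split => //; apply: wact_HA.
Qed.

Lemma sg_coset_Hexp eps h k : (forall j, is_sign (eps j)) ->
  in_coset (h_eps eps) (Hexp C) h -> Num.sg (h k) = eps k.
Proof.
move=> eps_sign [z [z_H ->]]; rewrite /tmul h_eps_sign //.
by apply: sgr_sign_mul => //; apply: HA_gt0 z_H.
Qed.

End CartanTorus.

Theorem proposition2p2p4 (R : realType) (l : nat) (C : 'M[int]_l)
  (A : {set 'I_l}) (i : 'I_l) (eps : 'I_l -> R) :
  is_cartan R C -> i \notin A -> in_EA A eps ->
  let eps' := fun j => eps j * eps i ^ (- C j i) in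
  (* (a) *)
  ((eps i = 1 -> wact C i (h_eps eps) = h_eps eps) /\
   (eps i = -1 ->
      wact C i (h_eps eps) = h_eps eps' /\
      exists epsA, in_EA A epsA /\
        h_eps eps' =
          tmul (fun k => \prod_(j < l | (j \in A) && odd `|C j i|%N) hgen R j k)
               (h_eps epsA))) /\
  (* (b) *)
  ((eps i = 1 -> forall x, in_coset (h_eps eps) (HA C A) x ->
                   in_coset (h_eps eps) (HA C A) (wact C i x)) /\
   (eps i = -1 -> forall x, in_coset (h_eps eps) (HA C A) x ->
                   in_coset (h_eps eps') (HA C A) (wact C i x))) /\
  (* (c) *)
  (forall (k : 'I_l) (h h' : 'I_l -> R),
     in_coset (h_eps eps) (Hexp C) h ->
     (exists z, in_coset (h_eps eps) (Hexp C) z /\ h' = wact C i z) ->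
     Num.sg (chi (sroot k) h) = eps k /\
     Num.sg (chi (srefl C i (sroot k)) h') = eps k).
Proof.
move=> [Cii _] iA [eps_sign eps_A] eps'.
have eps'_sign j : is_sign (eps' j) by apply: is_signM (is_sign_expz _ _).
have wact_eps : wact C i (h_eps eps) = h_eps eps' by apply: wact_h_eps.
have eps'_id : eps i = 1 -> eps' = eps.
  by move=> eps_i; apply/funext => j; rewrite /eps' eps_i exp1rz mulr1.
have coset_eps' x : in_coset (h_eps eps) (HA C A) x ->
    in_coset (h_eps eps') (HA C A) (wact C i x).
  by rewrite -wact_eps; apply: wact_in_coset.
split; [split | split; [split | ]].
- by move=> /eps'_id eps'E; rewrite wact_eps eps'E.
- move=> eps_i; split => //.
  exists (fun k => if k \in A then 1 else eps' k); split.
    split=> j; last by move=> ->.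
    by case: ifP => _; [left | apply: eps'_sign].
  rewrite (h_eps_splitA A); congr tmul; apply/funext => k; apply: eq_bigl => j.
  by case jA: (j \in A); rewrite //= /eps' eps_A // eps_i mul1r expN1z_eqN1 abszN.
- by move=> /eps'_id eps'E x; rewrite -{2}eps'E; apply: coset_eps'.
- by move=> _; apply: coset_eps'.
move=> k h h' h_coset [z [z_coset ->]]; split.
  by rewrite chi_sroot (sg_coset_Hexp k eps_sign h_coset).
have z_neq0 m : z m != 0.
  by rewrite -sgr_eq0 (sg_coset_Hexp m eps_sign z_coset) is_sign_neq0.
(* chi_{s_i alpha_k} (s_i z) is by definition the k-th coordinate of s_i (s_i z) *)
rewrite -/(wact C i (wact C i z) k) wactK //.
exact: sg_coset_Hexp k eps_sign z_coset.
Qed.
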